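(* Consider the behaviorally coupled two-pathogen model described in the context, with spillover constant $s\in[0,1]$, and assume $\mathcal{R}_{0,A}>\mathcal{R}_{0,B}>1$. Let $\bar I_A>0$ be the infectious level of disease $A$ at the disease-$B$-free boundary equilibrium, i.e. the unique positive solution of $e^{k I}=\beta_{0,A}\tau_I-\beta_{0,A}(\tau_I+\tau_R)I$. Suppose that disease $B$ is excluded at this equilibrium in the sense that $$\mathcal{R}_{0,B}<\frac{e^{k\bar I_A}}{e^{k\bar I_A}-s\left(e^{k\bar I_A}-1\right)}.$$ Then $$s> s_{\text{threshold}}:=\frac{1-\frac{1}{\mathcal{R}_{0,B}}}{1-\frac{1}{\mathcal{R}_{0,A}}}.$$
   Context: Model: for $i\in\{A,B\}$ with $j$ denoting the other disease, state variables $S_i,I_i,R_i,\widetilde I_i$ (proportions of the population susceptible, infectious, recovered and ''perceived infectious'' for disease $i$) satisfy $\dot S_i=-\beta_i S_iI_i+R_i/\tau_R$, $\dot I_i=\beta_iS_iI_i-I_i/\tau_I$, $\dot R_i=I_i/\tau_I-R_i/\tau_R$, $\dot{\widetilde I}_i=(I_i-\widetilde I_i)/\tau_P$, with $S_i+I_i+R_i=1$, where the transmission rate is $\beta_i=\beta_{0,i}\,e^{-k\widetilde I_i}\bigl(1-s(1-e^{-k\widetilde I_j})\bigr)$. All parameters $\beta_{0,A},\beta_{0,B},\tau_I,\tau_R,\tau_P,k$ are positive, and $s\in[0,1]$ is the spillover constant ($s=0$: no spillover, so $\beta_i=\beta_{0,i}e^{-k\widetilde I_i}$; $s=1$: perfect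 spillover, so $\beta_i=\beta_{0,i}e^{-k(\widetilde I_A+\widetilde I_B)}$; $0<s<1$: imperfect spillover). The basic reproduction numbers are $\mathcal{R}_{0,i}=\beta_{0,i}\tau_I$. The disease-$B$-free (disease-$A$ boundary) equilibrium is $(S_A,I_A,R_A,\widetilde I_A,S_B,I_B,R_B,\widetilde I_B)=(1-\bar I_A-\tfrac{\tau_R}{\tau_I}\bar I_A,\ \bar I_A,\ \tfrac{\tau_R}{\tau_I}\bar I_A,\ \bar I_A,\ 1,0,0,0)$. *)

From Stdlib Require Import Reals.
Open Scope R_scope.

Definition R0num (beta0 tauI : R) : R := beta0 * tauI.

Definition boundary_IA (beta0A tauI tauR k I : R) : Prop :=
  0 < I /\ exp (k * I) = beta0A * tauI - beta0A * (tauI + tauR) * I.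

Definition B_excluded (beta0B tauI k s IA : R) : Prop :=
  R0num beta0B tauI < exp (k * IA) / (exp (k * IA) - s * (exp (k * IA) - 1)).

Definition s_threshold (beta0A beta0B tauI : R) : R :=
  (1 - / R0num beta0B tauI) / (1 - / R0num beta0A tauI).

(* Write E := exp (k * IA).  The boundary equation gives 1 < E < R0_A, because the
   right-hand side is R0_A minus a positive term.  Solving the exclusion inequality
   for s gives s > (1 - 1/R0_B) / (1 - 1/E), and since x |-> 1 - 1/x is increasing,
   replacing E by the larger R0_A only decreases the bound. *)
From Stdlib Require Import Reals Lra Psatz.
Open Scope R_scope.

Lemma boundary_IA_exp_bounds (beta0A tauI tauR k IA : R) :
  0 < beta0A -> 0 < tauI -> 0 < tauR -> 0 < k ->
  boundary_IA beta0A tauI tauR k IA ->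
  1 < exp (k * IA) < R0num beta0A tauI.
Proof.
  intros HA HI HR Hk [HIA HE]; split.
  - rewrite <- exp_0; apply exp_increasing; nra.
  - unfold R0num; rewrite HE.
    assert (0 < beta0A * (tauI + tauR) * IA) by (apply Rmult_lt_0_compat; nra).
    lra.
Qed.

Lemma exclusion_lower_bound (RB E s : R) :
  1 < E -> 1 < RB -> 0 <= s <= 1 ->
  RB < E / (E - s * (E - 1)) ->
  (1 - / RB) / (1 - / E) < s.
Proof.
  intros HE HRB Hs Hex.
  assert (Hden : 0 < E - s * (E - 1)) by nra.
  apply Rmult_lt_compat_r with (r := E - s * (E - 1)) in Hex; [|exact Hden].
  unfold Rdiv in Hex; rewrite Rmult_assoc, Rinv_l in Hex by lra.
  replace ((1 - / RB) / (1 - / E)) with (E * (RB - 1) / (RB * (E - 1))) by (field; lra).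
  apply Rmult_lt_reg_r with (RB * (E - 1)); [nra|].
  unfold Rdiv; rewrite Rmult_assoc, Rinv_l by nra.
  nra.
Qed.

Lemma div_one_sub_inv_lt (RB E RA : R) :
  1 < RB -> 1 < E -> E < RA ->
  (1 - / RB) / (1 - / RA) < (1 - / RB) / (1 - / E).
Proof.
  intros HRB HE HERA.
  assert (/ RB < 1) by (rewrite <- Rinv_1; apply Rinv_lt_contravar; lra).
  assert (/ E < 1) by (rewrite <- Rinv_1; apply Rinv_lt_contravar; lra).
  assert (/ RA < / E) by (apply Rinv_lt_contravar; nra).
  apply Rmult_lt_compat_l; [lra|].
  apply Rinv_lt_contravar; [apply Rmult_lt_0_compat|]; lra.
Qed.

Theorem theorem1 (beta0A beta0B tauI tauR tauP k s IA : R) :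
  0 < beta0A -> 0 < beta0B -> 0 < tauI -> 0 < tauR -> 0 < tauP -> 0 < k ->
  0 <= s <= 1 ->
  R0num beta0A tauI > R0num beta0B tauI -> R0num beta0B tauI > 1 ->
  boundary_IA beta0A tauI tauR k IA ->
  B_excluded beta0B tauI k s IA ->
  s > s_threshold beta0A beta0B tauI.
Proof.
  intros HA _ HI HR _ Hk Hs _ HB1 Hbd Hex.
  destruct (boundary_IA_exp_bounds _ _ _ _ _ HA HI HR Hk Hbd) as [HE1 HERA].
  apply Rlt_gt, Rlt_trans with ((1 - / R0num beta0B tauI) / (1 - / exp (k * IA))).
  - exact (div_one_sub_inv_lt _ _ _ HB1 HE1 HERA).
  - exact (exclusion_lower_bound _ _ _ HE1 HB1 Hs Hex).
Qed.
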